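(* Let $G$ be a cubic bipartite graph with $2k$ vertices and a proper 3-edge-coloring. Then the number of faces of the faithful embedding of $G$ relative to the 3-coloring has the same parity as $k$. Consequently, if $M$ is an orientable map, then $\chi(M)$ is even.
   Context: A proper 3-edge-coloring (colors $a,b,c$) of a cubic graph gives the $ab$-, $bc$-, $ca$-polygons (cycles of edges of two colors); the faithful embedding is obtained by attaching a disc along each such polygon, so its faces correspond to these polygons. A map is a triple $M=(C_M,v_M,f_M)$ where $C_M$ is a finite cubic graph and $v_M,f_M$ are disjoint perfect matchings whose union is a disjoint union of 4-cycles (squares, set $SQ(M)$); $a_M$ is the third perfect matching; $\chi(M)=|vG(M)|-|SQ(M)|+|fG(M)|$ where $vG(M)$, $fG(M)$ are the sets of cycles of $v_M\cup a_M$ and $f_M\cup a_M$. $M$ is orientable if $C_M$ is bipartite. *)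

From mathcomp Require Import all_boot all_order all_algebra.
Set Implicit Arguments. Unset Strict Implicit. Unset Printing Implicit Defensive.

(* A perfect matching of a (loopless, possibly multi-) graph on the vertex
   set V is encoded by the fixed-point-free involution x |-> partner of x. *)
Definition perfect_matching (V : finType) (s : V -> V) : Prop :=
  involutive s /\ forall x, s x != x.

(* A cubic graph with a proper 3-edge-coloring (colors a, b, c) on vertex set V:
   every vertex has exactly one edge of each color, so the graph is the
   union of three perfect matchings a, b, c (color classes). *)
Definition cubic_3colored (V : finType) (a b c : V -> V) : Prop :=
  [/\ perfect_matching a, perfect_matching b & perfect_matching c].

Definition bipartite3 (V : finType) (a b c : V -> V) : Prop :=
  exists side : V -> bool,
    forall x, [/\ side (a x) != side x, side (b x) != side x & side (c x) != side x].

Definition two_color_rel (V : finType) (s t : V -> V) : rel V :=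
  fun x y => (y == s x) || (y == t x).

Definition polygons (V : finType) (s t : V -> V) : nat :=
  n_comp (two_color_rel s t) V.

(* Number of faces of the faithful embedding: one disc per ab-, bc-, ca-polygon. *)
Definition faithful_faces (V : finType) (a b c : V -> V) : nat :=
  polygons a b + polygons b c + polygons c a.

(* A map M = (C_M, v_M, f_M): C_M cubic, v_M, f_M disjoint perfect matchings
   whose union is a disjoint union of 4-cycles, a_M the third perfect matching
   (the remaining edges).  Here C_M is given by the three matchings v, f, a. *)
Definition is_map (V : finType) (v f a : V -> V) : Prop :=
  cubic_3colored v f a /\
  forall x : V, #|[set y | connect (two_color_rel v f) x y]| = 4.

(* chi(M) = |vG(M)| - |SQ(M)| + |fG(M)|. *)
Definition euler_char (V : finType) (v f a : V -> V) : int :=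
  (polygons v a)%:Z - (polygons v f)%:Z + (polygons f a)%:Z.

(* M is orientable iff C_M is bipartite. *)
Definition orientable_map (V : finType) (v f a : V -> V) : Prop :=
  bipartite3 v f a.

From mathcomp Require Import all_boot all_algebra all_fingroup zify.
Set Implicit Arguments. Unset Strict Implicit.

(* Let W be the white class of the bipartition, so |W| = k.  For two colours
   s, t the map t o s permutes W, and its cycles are in bijection with the
   st-polygons.  The permutations b o a, c o b and a o c of W compose to the
   identity, and a permutation of k points with m cycles has sign (-1)^(k+m);
   multiplying the three signs gives faces = 3k = k (mod 2).  For a map the
   vf-polygons are squares, so |V| = 4|SQ|, k = 2|SQ| is even, the number of
   faces |vG| + |SQ| + |fG| is even, and so is chi = faces - 2|SQ|. *)

Lemma porbit_fconnect (T : finType) (p : {perm T}) x :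
  porbit p x = [set y | fconnect p x y].
Proof.
apply/setP=> y; rewrite inE; apply/porbitP/idP => [[i ->] | xy].
  by rewrite permX; apply: fconnect_iter.
by exists (findex p x y); rewrite permX iter_findex.
Qed.

Lemma card_porbits (T : finType) (p : {perm T}) : #|porbits p| = fcard p T.
Proof.
have p_sym := fconnect_sym (@perm_inj _ p).
have -> : porbits p = porbit p @: [set x | froots p x].
  apply/setP=> Y; apply/imsetP/imsetP=> [[x _ ->] | [x _ ->]]; last by exists x.
  exists (froot p x); first by rewrite inE roots_root.
  rewrite !porbit_fconnect; apply/setP=> y; rewrite !inE.
  by rewrite (same_connect p_sym (connect_root _ x)).
rewrite card_in_imset; first by apply: eq_card => x; rewrite !inE andbT.
move=> x y; rewrite !inE => /eqP rx /eqP ry xy_orbit.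
have : y \in porbit p x by rewrite xy_orbit porbit_id.
by rewrite porbit_fconnect inE => /(fingraph.rootP p_sym); rewrite rx ry.
Qed.

Lemma card_uniform_components (T : finType) (e : rel T) m :
  connect_sym e -> (forall x, #|connect e x| = m) -> #|T| = m * n_comp e T.
Proof.
move=> e_sym e_m; rewrite -sum1_card.
rewrite (partition_big (fingraph.root e) (roots e)) => [|x _]; last exact: roots_root.
rewrite (eq_bigr (fun _ => m)) => [|r /eqP r_root].
  by rewrite sum_nat_const mulnC; congr (_ * _); apply: eq_card => x; rewrite !inE andbT.
rewrite sum1_card -(e_m r); apply: eq_card => y; rewrite !inE.
by rewrite -(root_connect e_sym) r_root eq_sym.
Qed.

Lemma two_color_rel_sym (V : finType) (s t : V -> V) :
  involutive s -> involutive t -> connect_sym (two_color_rel s t).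
Proof.
move=> s_inv t_inv; apply: sym_connect_sym => x y; rewrite /two_color_rel.
by apply/orP/orP; case=> /eqP->; rewrite ?s_inv ?t_inv eqxx; auto.
Qed.

Lemma polygonsC (V : finType) (s t : V -> V) : polygons s t = polygons t s.
Proof.
apply: eq_n_comp => x y; apply: eq_connect => u w.
by rewrite /two_color_rel orbC.
Qed.

Section Bipartite.

Variables (V : finType) (side : V -> bool).
Local Notation W := {x : V | side x}.

Lemma side_flipE (s : V -> V) :
  (forall x, side (s x) != side x) -> forall x, side (s x) = ~~ side x.
Proof. by move=> s_flip x; move: (s_flip x); case: (side (s x)); case: (side x). Qed.

Lemma card_bipartite (s : V -> V) :
  involutive s -> (forall x, side (s x) != side x) -> #|V| = 2 * #|{: W}|.
Proof.
move=> s_inv /side_flipE s_flip.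
rewrite card_sig -(cardC side) mul2n -addnn; congr (_ + _).
rewrite -(card_image (inv_inj s_inv)); apply: eq_card => x.
apply/imageP/idP => [[y black_y ->] | white_x].
  by move: black_y; rewrite !unfold_in /= s_flip.
by exists (s x); rewrite ?s_inv // !unfold_in /= s_flip negbK.
Qed.

Section TwoColors.

Variables (s t : V -> V).
Hypotheses (s_inv : involutive s) (t_inv : involutive t).
Hypotheses (s_flip : forall x, side (s x) != side x)
           (t_flip : forall x, side (t x) != side x).

Lemma side_polygon_step (x : W) : side (t (s (val x))).
Proof. by rewrite (side_flipE t_flip) (side_flipE s_flip) negbK (valP x). Qed.

Definition polygon_step (x : W) : W := exist (fun y => side y) _ (side_polygon_step x).

Lemma polygon_step_inj : injective polygon_step.
Proof.
move=> x y /(congr1 val) /= xy; apply: val_inj.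
by rewrite -(s_inv (val x)) -(t_inv (s (val x))) xy t_inv s_inv.
Qed.

Definition polygon_perm : {perm W} := perm polygon_step_inj.

Lemma polygon_permE x : val (polygon_perm x) = t (s (val x)).
Proof. by rewrite permE. Qed.

Lemma side_white_end x : side (if side x then x else s x).
Proof. by case: ifP => // /negbT; rewrite (side_flipE s_flip). Qed.

Definition white_end x : W := exist (fun y => side y) _ (side_white_end x).

Lemma polygons_porbits : polygons s t = #|porbits polygon_perm|.
Proof.
pose e := two_color_rel s t.
have step_sym := fconnect_sym (@perm_inj _ polygon_perm).
have e_s x : e x (s x) by rewrite /e /two_color_rel eqxx.
have e_t x : e x (t x) by rewrite /e /two_color_rel eqxx orbT.
have adj : rel_adjunction val e (frel polygon_perm) V.
  apply: (@intro_adjunction _ _ val _ _ step_sym V (fun _ _ _ => erefl) (fun x _ => white_end x)).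
  - move=> x _; split => [|y _ /orP[] /eqP->].
    + by rewrite /=; case: ifP => _; [exact: connect0 | exact: connect1].
    + have -> : white_end (s x) = white_end x.
        by apply: val_inj; rewrite /= (side_flipE s_flip); case: (side x); rewrite //= s_inv.
      exact: connect0.
    + case x_white: (side x); [rewrite step_sym|]; apply/connect1/eqP/val_inj;
        by rewrite polygon_permE /= (side_flipE t_flip) x_white /= ?s_inv ?t_inv.
  - move=> x' _; split => [|_ /eqP <-].
      by rewrite (_ : white_end _ = x') //; apply: val_inj; rewrite /= (valP x').
    by rewrite polygon_permE; apply: connect_trans (connect1 (e_s _)) (connect1 (e_t _)).
rewrite /polygons (adjunction_n_comp _ (two_color_rel_sym s_inv t_inv) step_sym _ adj) //.
by rewrite card_porbits; apply: eq_n_comp_r => x; rewrite !inE.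
Qed.

End TwoColors.

Lemma odd_faithful_faces_side (a b c : V -> V)
    (a_inv : involutive a) (b_inv : involutive b) (c_inv : involutive c)
    (a_flip : forall x, side (a x) != side x) (b_flip : forall x, side (b x) != side x)
    (c_flip : forall x, side (c x) != side x) :
  odd (faithful_faces a b c) = odd #|{: W}|.
Proof.
pose p := polygon_perm a_inv b_inv a_flip b_flip.
pose q := polygon_perm b_inv c_inv b_flip c_flip.
pose r := polygon_perm c_inv a_inv c_flip a_flip.
have pqr1 : (p * q * r = 1)%g.
  by apply/permP => x; apply: val_inj; rewrite !permM !polygon_permE perm1 c_inv b_inv a_inv.
have := @odd_perm1 W; rewrite -pqr1 !odd_permM /odd_perm /faithful_faces.
rewrite (polygons_porbits a_inv b_inv a_flip b_flip) (polygons_porbits b_inv c_inv b_flip c_flip).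
rewrite (polygons_porbits c_inv a_inv c_flip a_flip) -/p -/q -/r !oddD.
by case: (odd #|{: W}|); case: (odd #|porbits p|); case: (odd #|porbits q|); case: (odd #|porbits r|).
Qed.

End Bipartite.

Lemma odd_faithful_faces (V : finType) (a b c : V -> V) (k : nat) :
  cubic_3colored a b c -> bipartite3 a b c -> #|V| = (2 * k)%N ->
  odd (faithful_faces a b c) = odd k.
Proof.
move=> [[a_inv _] [b_inv _] [c_inv _]] [side flips] card_V.
have a_flip x : side (a x) != side x by case: (flips x).
have b_flip x : side (b x) != side x by case: (flips x).
have c_flip x : side (c x) != side x by case: (flips x).
rewrite (odd_faithful_faces_side a_inv b_inv c_inv a_flip b_flip c_flip).
by move: card_V; rewrite (card_bipartite a_inv a_flip) => /eqP; rewrite eqn_mul2l => /eqP->.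
Qed.

Lemma euler_char_even (V : finType) (v f a : V -> V) :
  is_map v f a -> orientable_map v f a -> (2 %| euler_char v f a)%Z.
Proof.
move=> [colored squares] bip; have [[v_inv _] [f_inv _] _] := colored.
have card_V : #|V| = (2 * (2 * polygons v f))%N.
  rewrite mulnA (@card_uniform_components _ _ 4 (two_color_rel_sym v_inv f_inv)) // => x.
  by rewrite -(squares x); apply: eq_card => y; rewrite inE.
have faces_even := odd_faithful_faces colored bip card_V.
have -> : euler_char v f a = ((faithful_faces v f a)%:Z - (2 * polygons v f)%:Z)%R.
  by rewrite /euler_char /faithful_faces (polygonsC a v); lia.
by rewrite GRing.rpredB // !dvdzE /= !dvdn2 ?faces_even oddM.
Qed.

Theorem theorem1p7 :
  (forall (V : finType) (a b c : V -> V) (k : nat),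
      cubic_3colored a b c -> bipartite3 a b c -> #|V| = (2 * k)%N ->
      odd (faithful_faces a b c) = odd k)
  /\
  (forall (V : finType) (v f a : V -> V),
      is_map v f a -> orientable_map v f a ->
      (2 %| euler_char v f a)%Z).
Proof. exact: (conj odd_faithful_faces euler_char_even). Qed.
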